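(* Let $d\geq 1$ be an integer and let $G$ be a connected bipartite graph with $|V(G)|\geq 2d+2$ and $\alpha(G)\geq d+1$. Then there exists a set $S\subseteq E(G)$ with $|S|\leq 2d+1$ such that $\alpha(G/S)\leq \alpha(G)-d$. In other words, $(G,2d+1)$ is a yes-instance of $d$-Contraction Blocker$(\alpha)$.
   Context: $\alpha(G)$ denotes the independence number of $G$, i.e. the maximum size of a set of pairwise non-adjacent vertices. For $S\subseteq E(G)$, $G/S$ is the graph obtained from $G$ by contracting every edge of $S$. Equivalently, the vertices of $G/S$ correspond to the connected components of the spanning subgraph $(V(G),S)$, and two such vertices are adjacent iff some vertex of the one component is adjacent in $G$ to some vertex of the other. $d$-Contraction Blocker$(\pi)$ (for fixed $d\ge 1$) takes a graph $G$ and an integer $k$ and asks whether there is $S\subseteq E(G)$ with $|S|\le k$ and $\pi(G/S)\le \pi(G)-d$. *)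

From mathcomp Require Import all_boot.
Set Implicit Arguments. Unset Strict Implicit. Unset Printing Implicit Defensive.

Definition simple_graph (T : finType) (e : rel T) : Prop :=
  symmetric e /\ irreflexive e.

Definition edges (T : finType) (e : rel T) : {set {set T}} :=
  [set [set p.1; p.2] | p : T * T & e p.1 p.2].

Definition connected_graph (T : finType) (e : rel T) : Prop :=
  forall x y : T, connect e x y.

Definition bipartite (T : finType) (e : rel T) : Prop :=
  exists f : T -> bool, forall x y, e x y -> f x != f y.

Definition independent (T : finType) (e : rel T) (A : {set T}) : bool :=
  [forall x in A, forall y in A, ~~ e x y].

Definition alpha (T : finType) (e : rel T) : nat :=
  \max_(A : {set T} | independent e A) #|A|.

(* Contraction G/S: vertices are the connected components of (V(G), S). *)
Definition srel (T : finType) (S : {set {set T}}) : rel T :=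
  fun x y => [set x; y] \in S.

Definition comps (T : finType) (S : {set {set T}}) : {set {set T}} :=
  [set [set y | connect (srel S) x y] | x : T].

Definition cadj (T : finType) (e : rel T) (C D : {set T}) : bool :=
  [exists x in C, exists y in D, e x y].

Definition cindependent (T : finType) (e : rel T) (S : {set {set T}})
  (I : {set {set T}}) : bool :=
  (I \subset comps S) &&
  [forall C in I, forall D in I, (C != D) ==> ~~ cadj e C D].

Definition alpha_contr (T : finType) (e : rel T) (S : {set {set T}}) : nat :=
  \max_(I : {set {set T}} | cindependent e S I) #|I|.

From mathcomp Require Import all_boot zify.
Set Implicit Arguments. Unset Strict Implicit. Unset Printing Implicit Defensive.

(* By König's theorem a bipartite graph has a matching M with
   alpha(G) >= |V| - |M|.  Grow a connected set W of 2d+2 vertices along a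
   tree S of 2d+1 edges, adding whenever possible the M-partner of a vertex of
   W; then at most d+1 edges of M meet W.  Contracting S merges W into one
   vertex and leaves the other vertices alone.  An independent set of G/S
   containing W yields, with the larger colour class of W (at least d+1
   vertices), an independent set of G that is d larger.  One avoiding W is a
   set J of vertices outside W, and each edge of M missing W has an endpoint
   outside J and W, so |J| <= |V| - |W| - |M| + (d+1) <= alpha(G) - d - 1. *)

Section Independence.
Variables (T : finType) (e : rel T).

Definition vertex_cover (X : {set T}) : Prop :=
  forall x y, e x y -> (x \in X) || (y \in X).

Lemma independentP (A : {set T}) :
  reflect {in A &, forall x y, ~~ e x y} (independent e A).
Proof.
apply: (iffP forall_inP) => [indA x y xA yA | ndA x xA].
- exact: (forall_inP (indA x xA)).
- by apply/forall_inP => y; apply: ndA.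
Qed.

Lemma independent_le_alpha (A : {set T}) : independent e A -> #|A| <= alpha e.
Proof. exact: (leq_bigmax_cond (F := fun B : {set T} => #|B|)). Qed.

Lemma vertex_cover_alpha (X : {set T}) : vertex_cover X -> #|T| - #|X| <= alpha e.
Proof.
move=> coverX; have indCX : independent e (~: X).
  apply/independentP => x y; rewrite !inE => xX yX.
  by apply: contraNN xX => /coverX; rewrite (negbTE yX) orbF.
by have := independent_le_alpha indCX; have := cardsC X; lia.
Qed.

Lemma independentU (A B : {set T}) : symmetric e ->
  independent e A -> independent e B -> {in A & B, forall x y, ~~ e x y} ->
  independent e (A :|: B).
Proof.
move=> sym_e /independentP indA /independentP indB ndAB.
apply/independentP => x y; rewrite !inE.
case/orP=> [xA | xB] /orP[yA | yB].
- exact: indA.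
- exact: ndAB.
- by rewrite sym_e ndAB.
- exact: indB.
Qed.

Lemma bipartite_half_independent (col : T -> bool) (W : {set T}) :
  (forall x y, e x y -> col x != col y) ->
  exists X : {set T}, [/\ X \subset W, independent e X & #|W| <= 2 * #|X|].
Proof.
move=> col_e; pose C := [set x | col x].
have indC (A : {set T}) : {in A &, forall x y, col x = col y} -> independent e A.
  move=> monoA; apply/independentP => x y xA yA.
  by apply/negP => /col_e; rewrite (monoA x y) ?eqxx.
have := cardsID C W.
have [leDI | leID] := leqP #|W :\: C| #|W :&: C|.
- exists (W :&: C); split; [exact: subsetIl | | lia].
  by apply: indC => x y; rewrite !inE => /andP[_ ->] /andP[_ ->].
- exists (W :\: C); split; [exact: subsetDl | | lia].
  by apply: indC => x y; rewrite !inE => /andP[/negbTE -> _] /andP[/negbTE -> _].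
Qed.

End Independence.

Definition matching (T : finType) (e : rel T) (M : {set T * T}) : Prop :=
  (forall p, p \in M -> e p.1 p.2) /\
  (forall p q z, p \in M -> q \in M ->
     z \in [:: p.1; p.2] -> z \in [:: q.1; q.2] -> p = q).

Lemma matching_subrel (T : finType) (e e' : rel T) M :
  (forall x y, e' x y -> e x y) -> matching e' M -> matching e M.
Proof. by move=> sub [edgeM disjM]; split=> // p /edgeM /sub. Qed.

Lemma matchingU1 (T : finType) (e : rel T) M u v : matching e M -> e u v ->
    (forall q z, q \in M -> z \in [:: u; v] -> z \notin [:: q.1; q.2]) ->
  matching e ((u, v) |: M).
Proof.
move=> [edgeM disjM] euv avoid; split=> [p | p q z].
  by rewrite in_setU1 => /orP[/eqP -> // | /edgeM].
rewrite !in_setU1 => /orP[/eqP -> | pM] /orP[/eqP -> | qM] //; last exact: disjM.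
- by move=> zuv; rewrite (negbTE (avoid q z qM zuv)).
- by move=> zp zuv; rewrite (negbTE (avoid p z pM zuv)) in zp.
Qed.

Section Konig.
Variables (T : finType) (col : T -> bool).

Definition oriented (e : rel T) := forall x y, e x y -> col x && ~~ col y.

Definition del_edge (e : rel T) u v := [rel x y | e x y && ((x, y) != (u, v))].
(* For oriented e, this is e with the vertices u and v deleted. *)
Definition del_ends (e : rel T) u v := [rel x y | [&& e x y, x != u & y != v]].

Definition merge_covers (b : bool) (X1 X2 : {set T}) : {set T} :=
  [set z | if col z == b then (z \in X1) || (z \in X2) else (z \in X1) && (z \in X2)].

Lemma card_merge_covers X1 X2 :
  #|merge_covers true X1 X2| + #|merge_covers false X1 X2| = #|X1| + #|X2|.
Proof.
rewrite -cardsUI -[RHS]cardsUI; congr (_ + _); apply: eq_card => z; rewrite !inE;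
  by case: (col z); case: (z \in X1); case: (z \in X2).
Qed.

Section KonigStep.
Variables (e : rel T) (u v : T) (M1 M2 : {set T * T}) (X1 X2 : {set T}).
Hypotheses (orient : oriented e) (euv : e u v).
Hypotheses (mM1 : matching (del_edge e u v) M1) (cover1 : vertex_cover (del_edge e u v) X1).
Hypotheses (mM2 : matching (del_ends e u v) M2) (cover2 : vertex_cover (del_ends e u v) X2).
Hypotheses (leXM1 : #|X1| <= #|M1|) (leXM2 : #|X2| <= #|M2|).

Lemma vertex_cover_merge_true : v \notin X1 -> vertex_cover e (u |: merge_covers true X1 X2).
Proof.
move=> vX1 x y exy; have /andP[cx /negbTE ncy] := orient exy.
rewrite !inE cx ncy /=; have [// | xu] := eqVneq x u.
have := @cover1 x y; rewrite /= exy xpair_eqE (negbTE xu) => /(_ isT) cov1.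
have [eyv | yv] := eqVneq y v; first by move: cov1; rewrite eyv (negbTE vX1) orbF => ->.
have := @cover2 x y; rewrite /= exy xu yv => /(_ isT).
by move: cov1; case: (x \in X1); case: (x \in X2); case: (y \in X1); case: (y \in X2); rewrite ?orbT.
Qed.

Lemma vertex_cover_merge_false : u \notin X1 -> vertex_cover e (v |: merge_covers false X1 X2).
Proof.
move=> uX1 x y exy; have /andP[cx /negbTE ncy] := orient exy.
rewrite !inE cx ncy /=; have [-> | yv] := eqVneq y v; first by rewrite orbT.
have := @cover1 x y; rewrite /= exy xpair_eqE (negbTE yv) andbF => /(_ isT) cov1.
have [exu | xu] := eqVneq x u; first by move: cov1; rewrite exu (negbTE uX1) /= => ->; rewrite orbT.
have := @cover2 x y; rewrite /= exy xu yv => /(_ isT).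
by move: cov1; case: (x \in X1); case: (x \in X2); case: (y \in X1); case: (y \in X2); rewrite ?orbT.
Qed.

Lemma matching_del_ends_avoid q z :
  q \in M2 -> z \in [:: u; v] -> z \notin [:: q.1; q.2].
Proof.
have /andP[cu ncv] := orient euv.
move/mM2.1 => /and3P[/orient/andP[cq1 ncq2] q1u q2v].
rewrite !inE => /orP[] /eqP ->; apply/norP; split; apply/eqP => E.
- by move: q1u; rewrite -E eqxx.
- by move: ncq2; rewrite -E cu.
- by move: cq1; rewrite -E (negbTE ncv).
- by move: q2v; rewrite -E eqxx.
Qed.

(* Either X1 already covers uv, or M2 + uv beats X1 + u, or one of
   u + merge_covers true and v + merge_covers false, whose sizes add up to at
   most |X1| + |X2| + 2, has at most |M1| vertices. *)
Lemma konig_step :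
  exists (M : {set T * T}) (X : {set T}), [/\ matching e M, vertex_cover e X & #|X| <= #|M|].
Proof.
have cardU1 (z : T) (Z : {set T}) : #|z |: Z| <= #|Z|.+1.
  by rewrite cardsU1 -add1n leq_add2r leq_b1.
have mM1e : matching e M1 by apply: matching_subrel mM1 => x y /andP[].
have [uvX1 | ] := boolP ((u \in X1) || (v \in X1)).
  exists M1, X1; split=> // x y exy; have [[-> ->] // | neq] := eqVneq (x, y) (u, v).
  by apply: cover1; rewrite /= exy neq.
rewrite negb_or => /andP[uX1 vX1].
have [le12 | lt21] := leqP #|M1| #|M2|.
  exists ((u, v) |: M2), (u |: X1); split.
  - apply: (matchingU1 _ euv matching_del_ends_avoid).
    by apply: matching_subrel mM2 => x y /andP[].
  - move=> x y exy; have [[-> ->] | neq] := eqVneq (x, y) (u, v); first by rewrite setU11.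
    by rewrite !inE; case/orP: (@cover1 x y (introT andP (conj exy neq))) => ->; rewrite !orbT.
  - have /negbTE uvM2 : (u, v) \notin M2.
      by apply/negP => /(matching_del_ends_avoid (z := u)); rewrite /= !inE eqxx => /(_ isT).
    by rewrite !cardsU1 uX1 uvM2 add1n ltnS (leq_trans leXM1).
have := card_merge_covers X1 X2.
set Z1 := merge_covers true X1 X2; set Z2 := merge_covers false X1 X2 => cardZ.
have [le1 | lt1] := leqP #|u |: Z1| #|M1|.
  by exists M1, (u |: Z1); split=> //; apply: vertex_cover_merge_true.
exists M1, (v |: Z2); split => //; first exact: vertex_cover_merge_false.
apply: leq_trans (cardU1 v Z2) _; rewrite -(ltn_add2l #|Z1|) cardZ.
have leMZ1 : #|M1| <= #|Z1| by rewrite -ltnS (leq_trans lt1 (cardU1 u Z1)).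
by apply: leq_ltn_trans (leq_add leXM1 leXM2) _; rewrite addnC ltn_add2r (leq_trans lt21 leMZ1).
Qed.

End KonigStep.

Lemma konig_oriented (e : rel T) : oriented e ->
  exists (M : {set T * T}) (X : {set T}), [/\ matching e M, vertex_cover e X & #|X| <= #|M|].
Proof.
have [n] := ubnP #|[set p : T * T | e p.1 p.2]|; elim: n e => // n IH e lt_en orient.
have [[u v] /= euv | no_edge] := pickP [pred p : T * T | e p.1 p.2]; last first.
  exists set0, set0; split; last by rewrite cards0.
  - by split=> [p | p q z]; rewrite inE.
  - by move=> x y exy; have := no_edge (x, y); rewrite /= exy.
have IH_without_uv (P : rel T) : ~~ P u v ->
    exists M X, [/\ matching [rel x y | e x y && P x y] M,
                    vertex_cover [rel x y | e x y && P x y] X & #|X| <= #|M|].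
  move=> nPuv; apply: IH => [|x y /andP[/orient //]].
  rewrite -ltnS (leq_trans _ lt_en) // ltnS; apply: proper_card; apply/properP; split.
  - by apply/subsetP => -[x y]; rewrite !inE => /andP[].
  - by exists (u, v); rewrite !inE /= ?euv // (negbTE nPuv).
have [M1 [X1 [mM1 cover1 leXM1]]] :=
  IH_without_uv (fun x y => (x, y) != (u, v)) ltac:(by rewrite /= eqxx).
have [M2 [X2 [mM2 cover2 leXM2]]] :=
  IH_without_uv (fun x y => (x != u) && (y != v)) ltac:(by rewrite /= eqxx).
exact: (konig_step orient euv mM1 cover1 mM2 cover2 leXM1 leXM2).
Qed.

Lemma konig (e : rel T) : symmetric e -> (forall x y, e x y -> col x != col y) ->
  exists (M : {set T * T}) (X : {set T}),
    [/\ matching e M, vertex_cover e X & #|X| <= #|M|].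
Proof.
move=> sym_e col_e.
have orient : oriented [rel x y | e x y && col x].
  by move=> x y /andP[/col_e]; case: (col x); case: (col y).
have [M [X [mM coverX leXM]]] := konig_oriented orient.
exists M, X; split=> //; first by apply: matching_subrel mM => x y /andP[].
move=> x y exy; case cx: (col x); first by apply: coverX; rewrite /= exy cx.
have cy : col y by move: (col_e x y exy); rewrite cx; case: (col y).
by rewrite orbC; apply: coverX; rewrite /= sym_e exy cy.
Qed.

End Konig.

Definition touching (T : finType) (M : {set T * T}) (W : {set T}) : {set T * T} :=
  [set p in M | (p.1 \in W) || (p.2 \in W)].

Lemma subset_touching (T : finType) (M : {set T * T}) W : touching M W \subset M.
Proof. by apply/subsetP => p /setIdP[]. Qed.

Section Touching.
Variables (T : finType) (e : rel T) (M : {set T * T}).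
Hypothesis mM : matching e M.

Lemma touchingU1 x W : touching M (x |: W) = touching M [set x] :|: touching M W.
Proof.
apply/setP => p; rewrite !inE.
by case: (p \in M); case: (p.1 == x); case: (p.2 == x); case: (p.1 \in W); case: (p.2 \in W).
Qed.

Lemma card_touching1 x : #|touching M [set x]| <= 1.
Proof.
apply/card_le1_eqP => p q; rewrite !inE => /andP[pM px] /andP[qM qx].
by apply: (mM.2 _ _ x qM pM); rewrite !inE ![x == _]eq_sym.
Qed.

Lemma card_touchingU1 x W : #|touching M (x |: W)| <= #|touching M W|.+1.
Proof.
rewrite touchingU1; apply: leq_trans (leq_card_setU _ _) _.
by rewrite -add1n leq_add2r card_touching1.
Qed.

Lemma touchingU1_matched p x W : p \in touching M W -> x \in [:: p.1; p.2] ->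
  touching M (x |: W) = touching M W.
Proof.
move=> pW xp; rewrite touchingU1; apply/setUidPr/subsetP => q /setIdP[qM qx].
have /setIdP[pM _] := pW; suff -> : q = p by [].
by apply: (mM.2 _ _ x qM pM); rewrite // !inE in qx *; rewrite ![x == _]eq_sym.
Qed.

Hypothesis irr_e : irreflexive e.

Lemma card_touching_inside W :
  {in touching M W, forall p, (p.1 \in W) && (p.2 \in W)} ->
  2 * #|touching M W| <= #|W|.
Proof.
move=> inW; set P := touching M W.
have PM p : p \in P -> p \in M by rewrite inE => /andP[].
pose endpoint (pb : (T * T) * bool) := if pb.2 then pb.1.1 else pb.1.2.
have inj_end : {in setX P [set: bool] &, injective endpoint}.
  move=> [p b] [q c] /setXP[/PM pM _] /setXP[/PM qM _]; rewrite /endpoint /= => E.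
  have epq : p = q.
    apply: (mM.2 _ _ (if b then p.1 else p.2) pM qM).
      by case: b {E}; rewrite !inE eqxx ?orbT.
    by rewrite E; case: c {E}; rewrite !inE eqxx ?orbT.
  subst q; have /eqP np12 : p.1 != p.2 by apply: contraTneq (mM.1 p pM) => ->; rewrite irr_e.
  by case: b c E => -[] // E; case: np12; rewrite E.
have sub : endpoint @: setX P [set: bool] \subset W.
  by apply/subsetP => _ /imsetP[[p [|]] /setXP[/inW /andP[p1W p2W] _] ->].
by have := subset_leq_card sub; rewrite (card_in_imset inj_end) cardsX cardsT card_bool mulnC.
Qed.

Lemma card_untouched (J W : {set T}) : independent e J -> [disjoint J & W] ->
  #|J| + #|W| + #|M| <= #|T| + #|touching M W|.
Proof.
move=> /independentP indJ disJW; set P := M :\: touching M W.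
have untouched p : p \in P -> [/\ p \in M, p.1 \notin W & p.2 \notin W].
  by case/setDP => pM; rewrite inE pM negb_or => /andP[].
pose g (p : T * T) := if p.1 \in J then p.2 else p.1.
have g_end p : g p \in [:: p.1; p.2] by rewrite /g !inE; case: (_ \in J); rewrite eqxx ?orbT.
have inj_g : {in P &, injective g}.
  move=> p q /untouched[pM _ _] /untouched[qM _ _] E.
  by apply: (mM.2 _ _ (g p) pM qM); rewrite // E.
have gJ p : p \in P -> g p \notin J.
  case/untouched => pM _ _; rewrite /g; case: ifPn => // p1J.
  by apply: contraTN (mM.1 p pM) => p2J; apply: indJ.
have gW p : p \in P -> g p \notin W by case/untouched => _ p1W p2W; rewrite /g; case: ifP.
have disJG : [disjoint J & g @: P].
  rewrite disjoint_subset; apply/subsetP => z zJ; rewrite inE.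
  by apply/imsetP => -[p /gJ pJ zE]; rewrite -zE zJ in pJ.
have subCW : J :|: g @: P \subset ~: W.
  apply/subsetP => z; rewrite !inE => /orP[zJ | /imsetP[p /gW pW ->] //].
  by rewrite (disjointFr disJW zJ).
have cardM : #|M| = #|touching M W| + #|P|.
  by rewrite -(cardsID (touching M W) M) (setIidPr (subset_touching _ _)).
have := subset_leq_card subCW; have := cardsC W.
rewrite cardsU (disjoint_setI0 disJG) cards0 subn0 (card_in_imset inj_g); lia.
Qed.

End Touching.

Definition connects (T : finType) (S : {set {set T}}) (W : {set T}) : Prop :=
  (forall s, s \in S -> s \subset W) /\ {in W &, forall x y, connect (srel S) x y}.

Lemma connectsU1 (T : finType) (S : {set {set T}}) (W : {set T}) w x :
  connects S W -> w \in W -> connects ([set w; x] |: S) (x |: W).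
Proof.
move=> [SW connW] wW; set S' := [set w; x] |: S; split.
  move=> s; rewrite in_setU1 => /orP[/eqP -> | /SW sW].
    by apply/subsetP => z /set2P[] ->; rewrite !inE ?eqxx ?wW ?orbT.
  exact: subset_trans sW (subsetUr _ _).
have symS' : connect_sym (srel S') by apply: sym_connect_sym => a b; rewrite /srel setUC.
have connS' a b : connect (srel S) a b -> connect (srel S') a b.
  by apply: connect_sub => c d Scd; apply: connect1; rewrite /srel in_setU1 -/(srel S c d) Scd orbT.
suff connw a : a \in x |: W -> connect (srel S') w a.
  by move=> a b /connw wa /connw wb; rewrite symS' in wa; apply: connect_trans wa wb.
case/setU1P => [-> | aW]; last exact/connS'/connW.
by apply: connect1; rewrite /srel setU11.
Qed.

Lemma comps_connects (T : finType) (S : {set {set T}}) (W : {set T}) C :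
  connects S W -> C \in comps S -> C = W \/ exists2 x, x \notin W & C = [set x].
Proof.
move=> [SW connW] /imsetP[x _ ->].
have SW2 a b : srel S a b -> (a \in W) && (b \in W).
  by move/SW/subsetP => sab; rewrite !sab ?set21 ?set22.
have closedW : closed (srel S) W by move=> a b /SW2/andP[-> ->].
have [xW | xW] := boolP (x \in W); [left | right; exists x => //];
  apply/setP => y; rewrite !inE; apply/idP/idP.
- by move/(closed_connect closedW); rewrite xW.
- exact: connW.
- have closedx : closed (srel S) (pred1 x).
    have neq_x z : z \in W -> (z == x) = false by apply: contraTF => /eqP ->.
    by move=> a b /SW2/andP[/neq_x aN /neq_x bN]; rewrite !inE aN bN.
  by move/(closed_connect closedx); rewrite !inE eqxx => /esym.
- by move/eqP ->; apply: connect0.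
Qed.

Section Growth.
Variables (T : finType) (e : rel T) (M : {set T * T}).
Hypotheses (sym_e : symmetric e) (irr_e : irreflexive e)
  (conn_e : connected_graph e) (mM : matching e M).

Lemma exists_boundary_edge (W : {set T}) w0 z : w0 \in W -> z \notin W ->
  exists w x, [/\ w \in W, x \notin W & e w x].
Proof.
move=> w0W zW.
have [[w x] /and3P[wW xW ewx] | noedge] :=
  pickP [pred p : T * T | [&& p.1 \in W, p.2 \notin W & e p.1 p.2]].
  by exists w, x.
have closedW : closed e W.
  move=> a b eab; apply/idP/idP => [aW | bW]; apply/negPn/negP => nW.
  - by have := noedge (a, b); rewrite /= aW nW eab.
  - by have := noedge (b, a); rewrite /= bW nW sym_e eab.
by have := closed_connect closedW (conn_e w0 z); rewrite w0W (negbTE zW).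
Qed.

Lemma extend_connected_set (W : {set T}) :
    0 < #|W| < #|T| -> 2 * #|touching M W| <= #|W|.+1 ->
  exists w x, [/\ w \in W, x \notin W, e w x & 2 * #|touching M (x |: W)| <= #|W|.+2].
Proof.
case/andP=> /card_gt0P[w0 w0W] ltWT touchW.
have [z] : exists z, z \in ~: W by apply/card_gt0P; have := cardsC W; lia.
rewrite inE => zW.
have [p /andP[pM crossp] | inside] :=
  pickP [pred p | (p \in M) && ((p.1 \in W) != (p.2 \in W))].
  have pW : p \in touching M W.
    by rewrite inE pM; move: crossp; case: (p.1 \in W); case: (p.2 \in W).
  have [w [y [wW yW ewy yp]]] : exists w y, [/\ w \in W, y \notin W, e w y & y \in [:: p.1; p.2]].
    have ep := mM.1 p pM; case: (boolP (p.1 \in W)) crossp => p1W /= p2W.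
    - by exists p.1, p.2; rewrite !inE eqxx orbT p1W p2W.
    - by exists p.2, p.1; rewrite !inE eqxx sym_e ep p1W; move: p2W; rewrite negbK.
  by exists w, y; rewrite (touchingU1_matched mM pW yp); split=> //; lia.
have inW : {in touching M W, forall p, (p.1 \in W) && (p.2 \in W)}.
  move=> p /setIdP[pM]; have := inside p; rewrite /= pM.
  by case: (p.1 \in W); case: (p.2 \in W).
have [w [x [wW xW ewx]]] := exists_boundary_edge w0W zW.
exists w, x; split=> //.
by have := card_touchingU1 mM x W; have := card_touching_inside mM irr_e inW; lia.
Qed.

Lemma grow_connected_set k : 0 < k <= #|T| ->
  exists (W : {set T}) (S : {set {set T}}),
    [/\ #|W| = k, S \subset edges e, #|S| < k, connects S W & 2 * #|touching M W| <= k.+1].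
Proof.
elim: k => [// | [|k] IH] /andP[_ kT].
  have [z _] := card_gt0P kT.
  exists [set z], set0; split; rewrite ?cards1 ?sub0set ?cards0 //.
    by split=> [s | x y]; rewrite !inE // => /eqP -> /eqP ->; apply: connect0.
  by have := card_touching1 mM z; lia.
have [W [S [cardW SE cardS cSW touchW]]] := IH (ltnW kT).
have sizeW : 0 < #|W| < #|T| by rewrite cardW.
rewrite -cardW in touchW.
have [w [x [wW xW ewx touchx]]] := extend_connected_set sizeW touchW.
exists (x |: W), ([set w; x] |: S); split.
- by rewrite cardsU1 xW cardW.
- by rewrite subUset sub1set SE andbT; apply/imsetP; exists (w, x); rewrite ?inE.
- by rewrite cardsU1; case: (_ \notin S); rewrite ltnS // ltnW.
- exact: connectsU1.
- by rewrite -cardW.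
Qed.
End Growth.

Section ContractedIndependentSets.
Variables (T : finType) (e : rel T) (S : {set {set T}}) (W : {set T}) (I : {set {set T}}).
Hypotheses (cSW : connects S W) (indI : cindependent e S I).

Definition outer_singletons := [set x | (x \notin W) && ([set x] \in I)].

Lemma cindependent_nonadj C D x y :
  C \in I -> D \in I -> C != D -> x \in C -> y \in D -> ~~ e x y.
Proof.
move=> CI DI CD xC yD; case/andP: indI => _ /forall_inP/(_ C CI)/forall_inP/(_ D DI).
by rewrite CD => /existsPn/(_ x); rewrite xC => /existsPn/(_ y); rewrite yD.
Qed.

Lemma card_cindependent : #|I| <= (W \in I) + #|outer_singletons|.
Proof.
rewrite (cardsD1 W) leq_add2l; apply: leq_trans (leq_imset_card set1 _).
apply/subset_leq_card/subsetP => C /setD1P[CW CI].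
have [CeW | [x xW CeX]] := comps_connects cSW (subsetP (proj1 (andP indI)) C CI).
  by rewrite CeW eqxx in CW.
by rewrite CeX in CI *; apply/imsetP; exists x; rewrite // inE xW CI.
Qed.

Lemma independent_outer_singletons : irreflexive e -> independent e outer_singletons.
Proof.
move=> irr_e; apply/independentP => x y; rewrite !inE => /andP[_ xI] /andP[_ yI].
have [-> | xy] := eqVneq x y; first by rewrite irr_e.
by apply: (cindependent_nonadj xI yI); rewrite ?set11 // (inj_eq set1_inj).
Qed.

Lemma outer_singletons_nonadj : W \in I -> {in W & outer_singletons, forall w x, ~~ e w x}.
Proof.
move=> WI w x wW; rewrite inE => /andP[xW xI].
apply: (cindependent_nonadj WI xI _ wW (set11 x)).
by apply: contraNneq xW => ->; apply: set11.
Qed.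

Lemma outer_singletons_disjoint : [disjoint outer_singletons & W].
Proof. by rewrite disjoint_subset; apply/subsetP => x; rewrite !inE => /andP[]. Qed.

End ContractedIndependentSets.

Theorem mainTheorem1 (T : finType) (e : rel T) (d : nat) :
  simple_graph e -> 1 <= d ->
  connected_graph e -> bipartite e ->
  (2 * d + 2 <= #|T|)%N -> (d + 1 <= alpha e)%N ->
  exists S : {set {set T}},
    [/\ S \subset edges e, (#|S| <= 2 * d + 1)%N &
        (alpha_contr e S <= alpha e - d)%N].
Proof.
move=> [sym_e irr_e] _ conn_e [col col_e] leT le_alpha.
have [M [X [mM coverX leXM]]] := konig sym_e col_e.
have alphaX := vertex_cover_alpha coverX.
have sizeW : 0 < 2 * d + 2 <= #|T| by rewrite leT addn2.
have [W [S [cardW SE cardS cSW touchW]]] := grow_connected_set sym_e irr_e conn_e mM sizeW.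
exists S; split=> //; first by lia.
apply/bigmax_leqP => I indI; have leI := card_cindependent cSW indI.
have indJ := independent_outer_singletons W indI irr_e.
have disJW := outer_singletons_disjoint W I.
set J := outer_singletons W I in leI indJ disJW.
have [WI | WnI] := boolP (W \in I); last first.
  by have := card_untouched mM indJ disJW; rewrite (negbTE WnI) in leI; lia.
have [Y [YW indY halfY]] := bipartite_half_independent W col_e.
have indJY : independent e (J :|: Y).
  apply: (independentU sym_e indJ indY) => x y xJ /(subsetP YW) yW.
  by rewrite sym_e; apply: (outer_singletons_nonadj indI WI yW xJ).
have := independent_le_alpha indJY.
by rewrite cardsU (disjoint_setI0 (disjointWr YW disJW)) cards0 subn0 WI in leI *; lia.
Qed.
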